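(* For every dimension $d\ge3$ and every integer $k\ge3$ there exists a $d$-dimensional lattice polytope $P\subseteq\mathbb{R}^d$ with $\mathrm{width}(P)=k$ such that for every integer $t\ge2$ there is a lattice point in $tP$ which is not a sum of $t$ lattice points of $P$. (For $d=3$ one can take $P=\mathrm{conv}(\{(3,0,-1),(0,2,-1)\}\cup[0,k]^3)$, and for $d>3$ its product with $[0,k]^{d-3}$.)
   Context: A lattice polytope is the convex hull of finitely many points of $\mathbb{Z}^d$. $\mathrm{width}(P)=\min_{u\in(\mathbb{Z}^d)^*\setminus\{0\}}\max_{x,y\in P}|u(x)-u(y)|$. *)

From HB Require Import structures.
From mathcomp Require Import all_boot all_order all_algebra.
Set Implicit Arguments. Unset Strict Implicit. Unset Printing Implicit Defensive.
Import Order.TTheory GRing.Theory Num.Theory.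
Local Open Scope ring_scope.

Section LatticePolytopes.
Variable R : realFieldType.
Variable d : nat.

Definition lpt (z : 'rV[int]_d) : 'rV[R]_d := map_mx (fun a : int => a%:~R) z.

(* A lattice polytope is given by a finite list V of lattice points;
   P = conv(V).  x \in conv(V) iff x is a convex combination of V. *)
Definition in_poly (V : seq 'rV[int]_d) (x : 'rV[R]_d) : Prop :=
  exists w : 'I_(size V) -> R,
    (forall i, 0 <= w i) /\ \sum_(i < size V) w i = 1 /\
    x = \sum_(i < size V) w i *: lpt (V`_i).

(* dimension of P = dimension of its affine hull
   = rank of the differences v_i - v_0 *)
Definition poly_dim (V : seq 'rV[int]_d) : nat :=
  \rank (\matrix_(i < size V) lpt (V`_i - V`_0)).

Definition lin (u : 'rV[int]_d) (x : 'rV[R]_d) : R :=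
  \sum_(i < d) (u 0 i)%:~R * x 0 i.

(* width(P) = w : the minimum over nonzero integer functionals u of
   max_{x,y in P} |u(x) - u(y)| equals w. *)
Definition is_width (V : seq 'rV[int]_d) (w : R) : Prop :=
  (exists u : 'rV[int]_d, u != 0 /\
     forall x y, in_poly V x -> in_poly V y -> `|lin u x - lin u y| <= w) /\
  (forall u : 'rV[int]_d, u != 0 ->
     exists x y, [/\ in_poly V x, in_poly V y & w <= `|lin u x - lin u y|]).

Definition in_dilate (t : nat) (V : seq 'rV[int]_d) (z : 'rV[int]_d) : Prop :=
  exists x, in_poly V x /\ lpt z = t%:R *: x.

Definition sum_of_lattice_pts (t : nat) (V : seq 'rV[int]_d) (z : 'rV[int]_d)
  : Prop :=
  exists p : 'I_t -> 'rV[int]_d,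
    (forall i, in_poly V (lpt (p i))) /\ \sum_(i < t) p i = z.

End LatticePolytopes.

From HB Require Import structures.
From mathcomp Require Import all_boot all_order all_algebra.
From mathcomp Require Import zify ring lra.
Import Order.TTheory GRing.Theory Num.Theory.
Local Open Scope ring_scope.

(* P = conv(0, k e_0, ..., k e_(d-1), A, B) with A = (3, 0, -1, 0, ...)
   and B = (0, 2, -1, 0, ...) serves in place of the paper's polytope.  The
   functional x_0 takes values in [0, k] on P, while a nonzero integer
   functional u varies by at least k |u_j| between 0 and k e_j, so the
   width is k.  Lattice points of P satisfy x_0 >= 0, x_1 >= 0, x_2 >= -1,
   2 x_0 + 3 x_1 + 6 x_2 >= 0 (the facet through 0, A, B) and
   -2 x_0 - 3 x_1 + 3k x_2 >= -6 - 3k (tight at A and B); hence those with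
   x_0 <= 2 satisfy x_1 + 2 x_2 >= 0, the only lattice point at height
   x_2 = -1 with x_0 <= 2 being B.  The point z = (2, 2t - 3, 1 - t) lies in
   tP; in a sum of t lattice points of P equal to z every summand has
   x_0 <= 2 (the x_0 are nonnegative and add up to 2), so x_1 + 2 x_2 >= 0
   would hold at z, where it equals -1. *)

Section ConvexHull.
Variables (R : realFieldType) (d : nat).
Implicit Types (V W : seq 'rV[int]_d) (u : 'rV[int]_d) (x y : 'rV[R]_d).

Lemma mem_in_poly V v : v \in V -> in_poly V (lpt R v).
Proof.
move=> vV; have iv : (index v V < size V)%N by rewrite index_mem.
exists (fun i : 'I_(size V) => if val i == index v V then 1 else 0 : R).
split; first by move=> i; case: ifP.
split.
  rewrite (bigD1 (Ordinal iv)) //= eqxx big1 ?addr0 // => j.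
  by rewrite -val_eqE /= => /negbTE ->.
rewrite (bigD1 (Ordinal iv)) //= eqxx scale1r big1 ?addr0 ?nth_index // => j.
by rewrite -val_eqE /= => /negbTE ->; rewrite scale0r.
Qed.

Lemma in_poly_convex V x y (l : R) :
  in_poly V x -> in_poly V y -> 0 <= l -> l <= 1 ->
  in_poly V (l *: x + (1 - l) *: y).
Proof.
move=> [w1 [w1_ge0 [w1_sum ->]]] [w2 [w2_ge0 [w2_sum ->]]] l_ge0 l_le1.
exists (fun i => l * w1 i + (1 - l) * w2 i); split.
  by move=> i; rewrite addr_ge0 // mulr_ge0 // subr_ge0.
split; first by rewrite big_split /= -!mulr_sumr w1_sum w2_sum !mulr1 subrKC.
rewrite !scaler_sumr -big_split /=; apply: eq_bigr => i _.
by rewrite !scalerA scalerDl.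
Qed.

Lemma lin_sum u (m : nat) (w : 'I_m -> R) (y : 'I_m -> 'rV[R]_d) :
  lin u (\sum_(i < m) w i *: y i) = \sum_(i < m) w i * lin u (y i).
Proof.
rewrite /lin; under eq_bigr => j _ do rewrite summxE mulr_sumr.
rewrite exchange_big /=; apply: eq_bigr => i _.
by rewrite mulr_sumr; apply: eq_bigr => j _; rewrite mxE mulrCA.
Qed.

Lemma lin_lpt u (p : 'rV[int]_d) :
  lin u (lpt R p) = (\sum_(i < d) u 0 i * p 0 i)%:~R.
Proof. by rewrite /lin rmorph_sum; apply: eq_bigr => i _; rewrite mxE rmorphM. Qed.

Lemma in_poly_lin_ge V u (c : R) x :
  (forall v, v \in V -> c <= lin u (lpt R v)) -> in_poly V x -> c <= lin u x.
Proof.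
move=> V_ge [w [w_ge0 [w_sum ->]]]; rewrite lin_sum.
rewrite -[c]mul1r -w_sum mulr_suml; apply: ler_sum => i _.
by apply: ler_wpM2l => //; apply/V_ge/mem_nth.
Qed.

Definition axis_pt (k : nat) (j : 'I_d) : 'rV[int]_d :=
  \row_(i < d) if i == j then k%:Z else 0.

Lemma lin_axis_pt u k j : lin u (lpt R (axis_pt k j)) = (u 0 j * k%:Z)%:~R.
Proof.
rewrite lin_lpt (bigD1 j) //= big1 ?addr0 ?mxE ?eqxx // => i /negbTE ne.
by rewrite mxE ne mulr0.
Qed.

Lemma poly_dim_axes k W :
  (0 < k)%N -> poly_dim R (0 :: [seq axis_pt k j | j <- enum 'I_d] ++ W) = d.
Proof.
move=> k_gt0; rewrite /poly_dim; set V := 0 :: _.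
have V_axis (j : 'I_d) : V`_j.+1 = axis_pt k j.
  rewrite /V /= nth_cat size_map size_enum_ord ltn_ord.
  by rewrite (nth_map j) ?nth_ord_enum ?size_enum_ord.
have lt_size (j : 'I_d) : (j.+1 < size V)%N.
  by rewrite /V /= size_cat size_map size_enum_ord ltnS ltn_addr.
set M := \matrix_(i < size V) _.
pose S : 'M[R]_(d, size V) := \matrix_(i, j) (val j == (val i).+1)%:R.
have SM : S *m M = k%:R *: 1%:M.
  apply/matrixP => i j; rewrite !mxE (bigD1 (Ordinal (lt_size i))) //= big1.
    rewrite !mxE eqxx mul1r addr0 V_axis subr0 !mxE eq_sym.
    by case: eqP => _; rewrite ?mulr1 ?mulr0.
  by move=> l; rewrite -val_eqE /= !mxE => /negbTE ->; rewrite mul0r.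
apply/anti_leq; rewrite rank_leq_col /= (leq_trans _ (mxrankM_maxr S M)) //.
by rewrite SM mxrank_scale_nz ?mxrank1 // pnatr_eq0 -lt0n.
Qed.

Lemma width_ge_axes V k u :
  0 \in V -> (forall j, axis_pt k j \in V) -> u != 0 ->
  exists x y, [/\ in_poly V x, in_poly V y & k%:R <= `|lin u x - lin u y|].
Proof.
move=> V0 V_axis u_neq0.
have [j uj_neq0] : exists j, u 0 j != 0.
  apply/existsP; apply: contraR u_neq0 => /existsPn u0.
  by apply/eqP/rowP => j; rewrite mxE; apply/eqP/negbNE.
exists (lpt R (axis_pt k j)), (lpt R 0); split; try exact: mem_in_poly.
rewrite lin_axis_pt lin_lpt big1 => [|i _]; last by rewrite mxE mulr0.
rewrite subr0 -intr_norm -[k%:R]/(k%:Z%:~R) ler_int; nia.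
Qed.

End ConvexHull.
Arguments axis_pt {d} k j.

Section Construction.
Variables (R : realFieldType) (n k : nat).
Hypothesis k_ge3 : (3 <= k)%N.
Local Notation d := n.+3.

Definition row3 (a b c : int) : 'rV[int]_d := \row_(i < d) [:: a; b; c]`_i.

Definition vertA : 'rV[int]_d := row3 3 0 (-1).
Definition vertB : 'rV[int]_d := row3 0 2 (-1).

Definition polyV : seq 'rV[int]_d :=
  0 :: [seq axis_pt k j | j <- enum 'I_d] ++ [:: vertA; vertB].

Definition i0 : 'I_d := @Ordinal d 0 isT.
Definition i1 : 'I_d := @Ordinal d 1 isT.
Definition i2 : 'I_d := @Ordinal d 2 isT.

Lemma lin_row3 a b c (x : 'rV[R]_d) :
  lin (row3 a b c) x = a%:~R * x 0 i0 + b%:~R * x 0 i1 + c%:~R * x 0 i2.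
Proof.
rewrite /lin 3!big_ord_recl big1 => [|i _]; last by rewrite mxE nth_default ?mul0r.
rewrite addr0 addrA !mxE.
by congr (_ * x 0 _ + _ * x 0 _ + _ * x 0 _); apply: val_inj.
Qed.

Lemma polyV_ind (P : 'rV[int]_d -> Prop) :
  P 0 -> (forall j, P (axis_pt k j)) -> P vertA -> P vertB ->
  forall v, v \in polyV -> P v.
Proof.
move=> P0 Paxis PA PB v; rewrite inE mem_cat => /or3P[/eqP-> // | | ].
  by move=> /mapP[j _ ->].
by rewrite !inE => /orP[] /eqP->.
Qed.

(* The side conditions are the inequality at the vertices 0, A, B and
   k e_0, k e_1, k e_2; at k e_j for j >= 3 it is e <= 0 again. *)
Lemma in_polyV_ge (a b c e : int) {x : 'rV[R]_d} : in_poly polyV x ->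
  e <= 0 -> e <= 3 * a - c -> e <= 2 * b - c ->
  e <= a * k%:Z -> e <= b * k%:Z -> e <= c * k%:Z ->
  e%:~R <= a%:~R * x 0 i0 + b%:~R * x 0 i1 + c%:~R * x 0 i2.
Proof.
move=> Px e_0 e_A e_B e_ax0 e_ax1 e_ax2; rewrite -lin_row3.
apply: in_poly_lin_ge Px; apply: polyV_ind => [|j||].
2: rewrite lin_axis_pt ler_int mxE.
2: by case: j => -[|[|[|j]]] ? /=; rewrite ?nth_nil; lia.
all: by rewrite lin_row3 !mxE /= -!intrM -!intrD ler_int; lia.
Qed.

Lemma lattice_polyV_ge (a b c e : int) {p : 'rV[int]_d} :
  in_poly polyV (lpt R p) ->
  e <= 0 -> e <= 3 * a - c -> e <= 2 * b - c ->
  e <= a * k%:Z -> e <= b * k%:Z -> e <= c * k%:Z ->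
  e <= a * p 0 i0 + b * p 0 i1 + c * p 0 i2.
Proof.
move=> /(in_polyV_ge a b c e) ge_e *.
by move: ge_e; rewrite !mxE -!intrM -!intrD ler_int; apply.
Qed.

Lemma width_polyV : is_width polyV (k%:R : R).
Proof.
split; last first.
  move=> u /width_ge_axes; apply; first exact: mem_head.
  by move=> j; rewrite inE mem_cat map_f ?mem_enum ?orbT.
exists (row3 1 0 0); split; first by apply/eqP => /rowP /(_ i0); rewrite !mxE.
have x0_bounds (x : 'rV[R]_d) : in_poly polyV x -> 0 <= x 0 i0 <= k%:R.
  move=> Px; apply/andP; split.
    suff : 0%:~R <= 1%:~R * x 0 i0 + 0%:~R * x 0 i1 + 0%:~R * x 0 i2 :> R.
      by rewrite !(mulr0z, mulr1z, mul0r, mul1r, addr0).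
    by apply: (in_polyV_ge _ _ _ _ Px); lia.
  suff : (- k%:Z)%:~R <= (-1)%:~R * x 0 i0 + 0%:~R * x 0 i1 + 0%:~R * x 0 i2 :> R.
    by rewrite !(intrN, mulr0z, mulr1z, mul0r, addr0, mulN1r) lerN2.
  by apply: (in_polyV_ge _ _ _ _ Px); lia.
move=> x y /x0_bounds/andP[x_ge0 x_le] /x0_bounds/andP[y_ge0 y_le].
by rewrite !lin_row3 !mul0r !addr0 !mul1r ler_norml; apply/andP; split; lra.
Qed.

Lemma polyV_lattice_pt {p : 'rV[int]_d} : in_poly polyV (lpt R p) ->
  0 <= p 0 i0 /\ (p 0 i0 <= 2 -> 0 <= p 0 i1 + 2 * p 0 i2).
Proof.
move=> Pp; pose ge a b c e := lattice_polyV_ge a b c e Pp.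
have x_ge0 : 0 <= 1 * p 0 i0 + 0 * p 0 i1 + 0 * p 0 i2 by apply: ge; lia.
have y_ge0 : 0 <= 0 * p 0 i0 + 1 * p 0 i1 + 0 * p 0 i2 by apply: ge; lia.
have h_ge : -1 <= 0 * p 0 i0 + 0 * p 0 i1 + 1 * p 0 i2 by apply: ge; lia.
have facet0 : 0 <= 2 * p 0 i0 + 3 * p 0 i1 + 6 * p 0 i2 by apply: ge; lia.
have facetk : -6 - 3 * k%:Z <= -2 * p 0 i0 + -3 * p 0 i1 + 3 * k%:Z * p 0 i2.
  by apply: ge; lia.
split=> [|x_le2]; first lia.
have [h_eq|] : p 0 i2 = -1 \/ 0 <= p 0 i2 by lia.
  by move: facetk; rewrite h_eq; lia.
lia.
Qed.

Definition gap_pt (t : nat) := row3 2 (2 * t%:Z - 3) (1 - t%:Z).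

Lemma gap_pt_not_sum t : ~ sum_of_lattice_pts R t polyV (gap_pt t).
Proof.
move=> [p [Pp sum_p]].
have coord_sum j : \sum_(i < t) p i 0 j = gap_pt t 0 j by rewrite -sum_p summxE.
have := coord_sum i0; have := coord_sum i1; have := coord_sum i2.
rewrite !mxE /= => sum_h sum_y sum_x.
have [i x_ge3 | x_le2] := pickP (fun i => 3 <= p i 0 i0).
  suff : 3 <= \sum_(i < t) p i 0 i0 by rewrite sum_x.
  rewrite (bigD1 i) //= ler_wpDr // sumr_ge0 // => j _.
  by case: (polyV_lattice_pt (Pp j)).
suff : 0 <= \sum_(i < t) (p i 0 i1 + 2 * p i 0 i2).
  by rewrite big_split /= -mulr_sumr sum_y sum_h; lia.
apply: sumr_ge0 => i _; case: (polyV_lattice_pt (Pp i)) => _; apply.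
by move/negbT: (x_le2 i); rewrite -ltNge; lia.
Qed.

(* gap_pt t = (t - 1) s + q with s = (A + (2t - 3) B) / (2t - 2) on the
   edge [A, B] and q = e_0 / 2 on the edge [0, k e_0]. *)
Lemma gap_pt_in_dilate t : (2 <= t)%N -> in_dilate R t polyV (gap_pt t).
Proof.
move=> t_ge2; set T : R := t%:R; set K : R := k%:R.
have T_ge2 : 2 <= T by rewrite /T (ler_nat R 2 t).
have K_ge3 : 3 <= K by rewrite /K (ler_nat R 3 k).
set mu := (2 * (T - 1))^-1; set nu := (2 * K)^-1; set l := (T - 1) / T.
set s := mu *: lpt R vertA + (1 - mu) *: lpt R vertB.
set q := nu *: lpt R (axis_pt k i0) + (1 - nu) *: lpt R 0.
have [Ps Pq] : in_poly polyV s /\ in_poly polyV q.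
  split; apply: in_poly_convex; rewrite ?invr_ge0 ?invf_le1; try lra;
    by apply: mem_in_poly; rewrite !(inE, mem_cat) ?map_f ?mem_enum ?eqxx ?orbT.
exists (l *: s + (1 - l) *: q); split.
  by apply: in_poly_convex; rewrite // ?divr_ge0 ?ler_pdivrMr; lra.
rewrite /s /q.
have [T_neq0 T1_neq0 K_neq0] : [/\ T != 0, T - 1 != 0 & K != 0].
  by split; apply/eqP; lra.
apply/rowP => -[[|[|[|j]]] lt_j]; rewrite !mxE /= ?nth_nil.
all: rewrite /l /mu /nu ?(intrD, intrM, intrN, intrB) -?pmulrn -/T -/K.
all: by field; rewrite ?T_neq0 ?T1_neq0 ?K_neq0.
Qed.

End Construction.

Theorem proposition2p6 (R : realFieldType) (d k : nat) :
  (3 <= d)%N -> (3 <= k)%N ->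
  exists V : seq 'rV[int]_d,
    [/\ poly_dim R V = d,
        is_width V (k%:R : R)
      & forall t : nat, (2 <= t)%N ->
          exists z : 'rV[int]_d,
            in_dilate R t V z /\ ~ sum_of_lattice_pts R t V z].
Proof.
case: d => [|[|[|n]]] // _ k_ge3.
exists (polyV n k); split.
- by apply: poly_dim_axes; lia.
- exact: width_polyV.
- move=> t t_ge2; exists (gap_pt n t).
  by split; [apply: gap_pt_in_dilate | apply: gap_pt_not_sum].
Qed.
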